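(* Let $X$ be a topologically complete space and $\mathcal A$ a family of closed, locally finite, normal covers of $X$ satisfying conditions (I) and (II), with $\Lambda$, $N_\lambda$, $N_\infty$, $N^{(0)}_\infty$, $\mathrm{cov}_\lambda$, $\sigma_\lambda$, $\wedge$ and $\pi:N_\infty\to X$ as in the context. Then: (1) the map $\pi$ is continuous; (2) for $z,z'\in N^{(0)}_\infty$, $\pi(z')=\pi(z)$ if and only if $\wedge z'(\lambda)\in\mathrm{star}_{\mathrm{cov}_\lambda}(\wedge z(\lambda))$ (i.e. $\wedge z'(\lambda)\cap\wedge z(\lambda)\neq\emptyset$) for each $\lambda\in\Lambda$; (3) if $z\in N_\infty$ and $z_0\in N^{(0)}_\infty$ satisfy that $z_0(\lambda)$ is a vertex of $\sigma_\lambda(z(\lambda))$ for each $\lambda\in\Lambda$, then $\pi(z)=\pi(z_0)$.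
   Context: A topologically complete space is a Tychonoff space complete with respect to its finest uniformity. A closed, locally finite, normal cover $\alpha$ of $X$ is a locally finite cover by closed sets admitting a partition of unity $\{\phi_{\alpha,V}:V\in\alpha\}$ with $\mathrm{cl}(\phi_{\alpha,V}^{-1}((0,1]))\subset\mathrm{int}(V)$, $\sum_V\phi_{\alpha,V}=1$. For a cover $\alpha$ and a set $S$, $\mathrm{star}_\alpha(S)=\{V\in\alpha:V\cap S\neq\emptyset\}$; $\mathrm{star}_\alpha(x)=\mathrm{star}_\alpha(\{x\})$. Conditions: (I) for each open $U\subset X$ and $x\in U$ there is $\alpha\in\mathcal A$ with $\bigcup\mathrm{star}_\alpha(x)\subset U$; (II) if $f(\alpha)\in\alpha$ is chosen for each $\alpha\in\mathcal A$ and $\{f(\alpha)\}$ has the finite intersection property, then $\bigcap_\alpha f(\alpha)\neq\emptyset$. Construction: $\Lambda$ is the set of finite subsets of $\mathcal A$ directed by inclusion. For $\lambda\in\Lambda$, $N^{(0)}_\lambda$ is the set of functions $v$ on $\lambda$ with $v(\alpha)\in\alpha$ for all $\alpha\in\lambda$ and $\wedge v:=\bigcap_{\alpha\in\lambda}v(\alpha)\neq\emptyset$ (empty intersection meaning $X$); $\mathrm{cov}_\lambda=\{\wedge v:v\in N^{(0)}_\lambda\}$. $F_\lambda$ is the simplicial complex (weak topology) with vertex set $N^{(0)}_\lambda$ in which $\{v_1,\dots,v_k\}$ spans a simplex iff $\wedge v_i\cap\wedge v_j\neq\emptyset$ for all $i,j$; $N_\lambda$ is its subcomplex with the same vertices in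 which $\{v_1,\dots,v_k\}$ spans a simplex iff $\bigcap_i\wedge v_i\neq\emptyset$. For $\lambda\subset\mu$, $\pi^\mu_\lambda$ is the simplicial map sending a vertex $v$ to $v|_\lambda$. $N_\infty=\varprojlim(N_\lambda,\pi^\mu_\lambda;\Lambda)$ with projections $\pi_\lambda$, $z(\lambda)=\pi_\lambda(z)$, and $N^{(0)}_\infty=\varprojlim(N^{(0)}_\lambda,\pi^\mu_\lambda|;\Lambda)\subset N_\infty$. For $a\in N_\lambda$, $\sigma_\lambda(a)$ is the unique simplex containing $a$ in its interior, and $\wedge a=\bigcap\{\wedge v: v\text{ a vertex of }\sigma_\lambda(a)\}$. For each $z\in N_\infty$ the set $\bigcap_{\lambda\in\Lambda}\wedge z(\lambda)$ consists of exactly one point, and $\pi:N_\infty\to X$ is defined by $\{\pi(z)\}=\bigcap_{\lambda}\wedge z(\lambda)$. *)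

From HB Require Import structures.
From mathcomp Require Import all_boot all_order all_algebra.
From mathcomp Require Import all_classical all_reals all_analysis.
Set Implicit Arguments. Unset Strict Implicit. Unset Printing Implicit Defensive.
Import Order.TTheory GRing.Theory Num.Theory.
Import numFieldNormedType.Exports.
Local Open Scope classical_set_scope.
Local Open Scope ring_scope.

Section Defs.
Variables (R : realType) (X : topologicalType).

Definition tychonoff : Prop :=
  (forall x : X, closed [set x]) /\
  (forall (C : set X) (x : X), closed C -> ~ C x ->
     exists f : X -> R, continuous f /\ f x = 0 /\ (forall y, C y -> f y = 1)).

Definition is_uniformity (U : set_system (X * X)) : Prop :=
  Filter U /\
  (forall A, U A -> forall x, A (x, x)) /\
  (forall A, U A -> U [set p | A (p.2, p.1)]) /\
  (forall A, U A -> exists2 B, U B &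
       forall x y z, B (x, y) -> B (y, z) -> A (x, z)).

Definition compatible_uniformity (U : set_system (X * X)) : Prop :=
  forall (x : X) (S : set X),
    nbhs x S <-> exists2 A, U A & [set y | A (x, y)] `<=` S.

Definition cauchy_wrt (U : set_system (X * X)) (F : set_system X) : Prop :=
  forall A, U A -> exists2 B, F B & forall x y, B x -> B y -> A (x, y).

(* Tychonoff and complete for its finest (fine) uniformity: a filter is Cauchy
   for the finest compatible uniformity iff it is Cauchy for every compatible
   uniformity (the finest one is the supremum of all of them). *)
Definition topologically_complete : Prop :=
  tychonoff /\
  forall F : set_system X, ProperFilter F ->
    (forall U, is_uniformity U -> compatible_uniformity U -> cauchy_wrt U F) ->
    exists x : X, nbhs x `<=` F.

Definition star (a : set (set X)) (S : set X) : set (set X) :=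
  [set V | a V /\ V `&` S !=set0].

Definition locally_finite (a : set (set X)) : Prop :=
  forall x : X, exists2 N, nbhs x N & finite_set [set V | a V /\ V `&` N !=set0].

Definition clf_normal_cover (a : set (set X)) : Prop :=
  (forall x : X, exists2 V, a V & V x) /\
  (forall V, a V -> closed V) /\
  locally_finite a /\
  exists phi : set X -> X -> R,
    (forall V, a V -> continuous (phi V)) /\
    (forall V x, a V -> 0 <= phi V x) /\
    (forall V, a V -> closure [set x | 0 < phi V x] `<=` interior V) /\
    (forall x, \sum_(V \in a) phi V x = 1).

Definition condition_I (A : set (set (set X))) : Prop :=
  forall (U : set X) (x : X), open U -> U x ->
    exists2 a, A a & \bigcup_(V in star a [set x]) V `<=` U.

Definition condition_II (A : set (set (set X))) : Prop :=
  forall f : set (set X) -> set X,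
    (forall a, A a -> a (f a)) ->
    (forall F, finite_set F -> F `<=` A -> (\bigcap_(a in F) f a) !=set0) ->
    (\bigcap_(a in A) f a) !=set0.

Definition Cov := set (set X).
Definition Vtx := Cov -> set X.   (* a vertex: a function on lambda, extended by setT *)
Definition Pt := Vtx -> R.        (* a nerve_point: barycentric coordinates *)

Definition Lam (A : set Cov) (l : set Cov) : Prop := finite_set l /\ l `<=` A.

Definition wedge (l : set Cov) (v : Vtx) : set X := \bigcap_(a in l) v a.

Definition vertex (l : set Cov) (v : Vtx) : Prop :=
  (forall a, l a -> a (v a)) /\ (forall a, ~ l a -> v a = setT) /\
  wedge l v !=set0.

Definition cov (l : set Cov) : set (set X) := [set wedge l v | v in vertex l].

Definition simplex (l : set Cov) (S : set Vtx) : Prop :=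
  finite_set S /\ S !=set0 /\ S `<=` vertex l /\ (\bigcap_(v in S) wedge l v) !=set0.

Definition sigma (p : Pt) : set Vtx := [set v | p v != 0].

(* points of the geometric realization |N_lambda| *)
Definition nerve_point (l : set Cov) (p : Pt) : Prop :=
  (forall v, 0 <= p v) /\ simplex l (sigma p) /\ \sum_(v \in sigma p) p v = 1.

Definition wedge_pt (l : set Cov) (p : Pt) : set X :=
  \bigcap_(v in sigma p) wedge l v.

(* open sets of |N_lambda| for the weak (Whitehead) topology *)
Definition weak_open (l : set Cov) (U : set Pt) : Prop :=
  forall S p, simplex l S -> nerve_point l p -> sigma p `<=` S -> U p ->
    exists2 e : R, 0 < e &
      forall q, nerve_point l q -> sigma q `<=` S ->
        (forall v, S v -> `|p v - q v| < e) -> U q.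

Definition restr (l : set Cov) (v : Vtx) : Vtx :=
  fun a => if `[< l a >] then v a else setT.

Definition proj_pt (l : set Cov) (p : Pt) : Pt :=
  fun w => \sum_(v \in [set v | restr l v = w]) p v.

(* N_infinity: threads of the inverse system *)
Definition thread (A : set Cov) (z : set Cov -> Pt) : Prop :=
  (forall l, Lam A l -> nerve_point l (z l)) /\
  (forall l m, Lam A l -> Lam A m -> l `<=` m -> forall w, z l w = proj_pt l (z m) w).

Definition is_vertex_pt (p : Pt) (v : Vtx) : Prop :=
  p v = 1 /\ forall w, w <> v -> p w = 0.

Definition thread0 (A : set Cov) (z : set Cov -> Pt) : Prop :=
  thread A z /\ forall l, Lam A l -> exists2 v, vertex l v & is_vertex_pt (z l) v.

Definition is_pi (A : set Cov) (pi : (set Cov -> Pt) -> X) : Prop :=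
  forall z, thread A z -> forall l, Lam A l -> wedge_pt l (z l) (pi z).

(* continuity of pi for the inverse-limit (product) topology on N_infinity *)
Definition nerve_pi_continuous (A : set Cov) (pi : (set Cov -> Pt) -> X) : Prop :=
  forall z, thread A z -> forall W : set X, open W -> W (pi z) ->
    exists L : set (set Cov), exists U : set Cov -> set Pt,
      [/\ finite_set L, L `<=` Lam A,
          (forall l, L l -> weak_open l (U l) /\ U l (z l)) &
          forall z', thread A z' -> (forall l, L l -> U l (z' l)) -> W (pi z')].

End Defs.

From Pilot Require Import Defs.
From HB Require Import structures.
From mathcomp Require Import all_boot all_order all_algebra.
From mathcomp Require Import all_classical all_reals all_analysis.
Import Order.TTheory GRing.Theory Num.Theory.
Import numFieldNormedType.Exports.
Local Open Scope classical_set_scope.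
Local Open Scope ring_scope.

(* Everything rests on one observation: if a cover [a] in [A] has its star at
   [pi z] inside an open set [U] and [a] belongs to [l], then the wedge of every
   vertex [v] of the carrier of [z(l)] lies in [U], because [v a] is a member of
   [a] containing [pi z].  Continuity follows by taking the open star of such a
   vertex as a neighbourhood of [z]; both identifications of points follow by
   separating two distinct images by disjoint open sets, which the wedges of
   meeting carriers cannot both avoid.  Only condition (I) and the Tychonoff
   property of X are needed. *)

Set Implicit Arguments.
Unset Strict Implicit.

(* Unqualified, [tychonoff] would be the Tychonoff theorem of the analysis library. *)
Lemma tychonoff_separation (R : realType) (X : topologicalType) (x y : X) :
  Defs.tychonoff R X -> x <> y ->
  exists U V : set X, [/\ open U, open V, U x, V y & U `&` V = set0].
Proof.
move=> [T1 creg] xy; have [f [fC [fx fy]]] := creg _ _ (T1 y) xy.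
exists (f @^-1` [set r | r < 2^-1]), (f @^-1` [set r | 2^-1 < r]); split.
- by apply: (proj1 (continuousP f) fC); exact: open_lt.
- by apply: (proj1 (continuousP f) fC); exact: open_gt.
- by rewrite /= fx invr_gt0.
- by rewrite /= fy // invf_lt1 // ltr1n.
- by apply/seteqP; split => // t [/= lt gt]; move: (lt_trans gt lt); rewrite ltxx.
Qed.

Lemma star_set1_sub (X : topologicalType) (a : set (set X)) (U : set X) x V :
  \bigcup_(W in star a [set x]) W `<=` U -> a V -> V x -> V `<=` U.
Proof. by move=> aU aV Vx t Vt; apply: aU; exists V => //; split => //; exists x. Qed.

Section Nerves.
Variables (R : realType) (X : topologicalType).

Lemma Lam_set1 (A : set (Cov X)) a : A a -> Lam A [set a].
Proof. by move=> Aa; split; [exact: finite_set1 | move=> b ->]. Qed.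

Lemma Lam_set2 (A : set (Cov X)) a b : A a -> A b -> Lam A ([set a] `|` [set b]).
Proof.
move=> Aa Ab; split; last by move=> c [->|->].
by rewrite finite_setU; split; exact: finite_set1.
Qed.

Lemma wedge_sub (l : set (Cov X)) (v : Vtx X) a : l a -> wedge l v `<=` v a.
Proof. by move=> la t; apply. Qed.

Lemma wedge_pt_sub (l : set (Cov X)) (p : Pt R X) v :
  sigma p v -> wedge_pt l p `<=` wedge l v.
Proof. by move=> pv t; apply. Qed.

Lemma sigma_vertex_pt (p : Pt R X) v : is_vertex_pt p v -> sigma p = [set v].
Proof.
case=> pv1 pw0; apply/seteqP; split => w; rewrite /sigma /=; last first.
  by move=> ->; rewrite pv1 oner_eq0.
by apply: contraNP => wv; rewrite pw0.
Qed.

Lemma wedge_vertex_pt (l : set (Cov X)) (p : Pt R X) v :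
  is_vertex_pt p v -> wedge_pt l p = wedge l v.
Proof. by move=> /sigma_vertex_pt pv; rewrite /wedge_pt pv bigcap_set1. Qed.

Lemma nerve_point_sigma (l : set (Cov X)) (p : Pt R X) :
  nerve_point l p -> exists v, sigma p v.
Proof. by case=> _ [[_ [[v pv] _]] _]; exists v. Qed.

Lemma nerve_point_sigma_vertex (l : set (Cov X)) (p : Pt R X) v :
  nerve_point l p -> sigma p v -> vertex l v.
Proof. by case=> _ [[_ [_ [sv _]]] _]; apply: sv. Qed.

Lemma weak_open_coord_neq0 (l : set (Cov X)) v :
  weak_open l [set q : Pt R X | q v != 0].
Proof.
move=> S p _ _ pS pv; exists `|p v|; first by rewrite normr_gt0.
move=> q _ _ near_p; apply/eqP => qv0.
by have := near_p v (pS v pv); rewrite qv0 subr0 ltxx.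
Qed.

Variables (A : set (Cov X)) (pi : (set (Cov X) -> Pt R X) -> X).
Hypotheses (condI : condition_I A) (pi_spec : is_pi A pi).

Lemma pi_in_carrier_wedge z l v :
  thread A z -> Lam A l -> sigma (z l) v -> wedge l v (pi z).
Proof. by move=> tz Ll zv; apply: wedge_pt_sub zv _ (pi_spec tz Ll). Qed.

Lemma carrier_wedge_sub z l v a (U : set X) :
  thread A z -> Lam A l -> l a -> sigma (z l) v ->
  \bigcup_(W in star a [set pi z]) W `<=` U -> wedge l v `<=` U.
Proof.
move=> tz Ll la zv aU t /(wedge_sub la); apply: (star_set1_sub (V := v a) aU).
- exact: (nerve_point_sigma_vertex (tz.1 l Ll) zv).1.
- exact: wedge_sub la _ (pi_in_carrier_wedge tz Ll zv).
Qed.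

Lemma pi_continuous : nerve_pi_continuous A pi.
Proof.
move=> z tz W oW Wz; have [a Aa aW] := condI oW Wz.
have Ll := Lam_set1 Aa; have [v zv] := nerve_point_sigma (tz.1 _ Ll).
exists [set [set a]], (fun=> [set q : Pt R X | q v != 0]); split.
- exact: finite_set1.
- by move=> m ->.
- by move=> m ->; split; [exact: weak_open_coord_neq0 | exact: zv].
- move=> z' tz' z'v; apply: (carrier_wedge_sub tz Ll erefl zv aW).
  exact: pi_in_carrier_wedge tz' Ll (z'v _ erefl).
Qed.

Lemma pi_eq_of_carriers_meet z z' :
  Defs.tychonoff R X -> thread A z -> thread A z' ->
  (forall l, Lam A l -> exists v v',
     [/\ sigma (z l) v, sigma (z' l) v' & wedge l v `&` wedge l v' !=set0]) ->
  pi z = pi z'.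
Proof.
move=> tych tz tz' meet; apply: contrapT => zz'.
have [U [U' [oU oU' Uz U'z' UU']]] := tychonoff_separation tych zz'.
have [a Aa aU] := condI oU Uz; have [a' Aa' aU'] := condI oU' U'z'.
have Ll := Lam_set2 Aa Aa'.
have [v [v' [zv z'v' [t [vt v't]]]]] := meet _ Ll.
have Ut := carrier_wedge_sub tz Ll (or_introl erefl) zv aU vt.
have U't := carrier_wedge_sub tz' Ll (or_intror erefl) z'v' aU' v't.
by rewrite -[False]/(set0 t) -UU'.
Qed.

End Nerves.

Theorem proposition2p4 (R : realType) (X : topologicalType)
  (A : set (set (set X))) (pi : (set (set (set X)) -> (set (set X) -> set X) -> R) -> X) :
  topologically_complete R X ->
  (forall a, A a -> clf_normal_cover R a) ->
  condition_I A -> condition_II A ->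
  is_pi A pi ->
  [/\ nerve_pi_continuous A pi,
      (forall z z', thread0 A z -> thread0 A z' ->
         pi z' = pi z <->
         (forall l, Lam A l ->
            star (cov l) (wedge_pt l (z l)) (wedge_pt l (z' l)))) &
      (forall z z0, thread A z -> thread0 A z0 ->
         (forall l, Lam A l -> forall v, is_vertex_pt (z0 l) v -> sigma (z l) v) ->
         pi z = pi z0)].
Proof.
move=> [tych _] _ condI _ pi_spec; split.
- exact: pi_continuous.
- move=> z z' [tz z0] [tz' z'0]; split=> [zz' l Ll | meet].
    have [v' lv' z'v'] := z'0 l Ll.
    split; first by rewrite (wedge_vertex_pt _ z'v'); exists v'.
    by exists (pi z); split; [rewrite -zz' |]; exact: pi_spec.
  apply/esym/(pi_eq_of_carriers_meet condI pi_spec tych tz tz') => l Ll.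
  have [[v _ zv] [v' _ z'v']] := (z0 l Ll, z'0 l Ll).
  exists v, v'; split; [by rewrite (sigma_vertex_pt zv) | by rewrite (sigma_vertex_pt z'v') |].
  rewrite setIC -(wedge_vertex_pt _ zv) -(wedge_vertex_pt _ z'v'); exact: proj2 (meet l Ll).
- move=> z z0 tz [tz0 z00] common.
  apply: (pi_eq_of_carriers_meet condI pi_spec tych tz tz0) => l Ll.
  have [v _ z0v] := z00 l Ll; have z0v' : sigma (z0 l) v by rewrite (sigma_vertex_pt z0v).
  exists v, v; split; [exact: common | by [] |].
  by exists (pi z0); split; exact: pi_in_carrier_wedge tz0 Ll z0v'.
Qed.
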